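(* Let $X$ be a discretely geodesic metric space with $\beta$-stable intervals, and let $x,x',v\in X$. Define $F_{xv}\colon B(v,\beta)\to\mathbb Z$ by $F_{xv}(u)=d(x,u)-d(x,v)$, and similarly $F_{x'v}$. If $F_{xv}\le F_{x'v}$ on $B(v,\beta)$, then $C(x,v)\subset C(x',v)$. Hence $F_{xv}=F_{x'v}$ implies $C(x,v)=C(x',v)$.
   Context: $B(v,\beta)$ is the closed ball. $X$ is discretely geodesic if $d$ is integer valued and any $x,y$ are joined by an isometric embedding $\gamma\colon\{0,\dots,d(x,y)\}\to X$ with $\gamma(0)=x,\gamma(d(x,y))=y$. $I(x,y)=\{u: d(x,u)+d(u,y)=d(x,y)\}$; $C(x,v)=\{y: v\in I(x,y)\}$. $\beta$-stable intervals: for all $x,y,y'$ with $d(y,y')=1$, the Hausdorff distance between $I(x,y)$ and $I(x,y')$ is at most $\beta$. *)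

(* A metric space with integer-valued (hence nat-valued, since
   nonnegative) distance. *)
From Stdlib Require Import ZArith Lia.

Record IntMetric (X : Type) := {
  dist : X -> X -> nat;
  dist_eq0 : forall x y, dist x y = 0 <-> x = y;
  dist_sym : forall x y, dist x y = dist y x;
  dist_tri : forall x y z, dist x z <= dist x y + dist y z
}.
Arguments dist {X} _ _ _.

Section Defs.
Context {X : Type} (M : IntMetric X).
Local Notation d := (dist M).

Definition ball (v : X) (beta : nat) (u : X) : Prop := d v u <= beta.

Definition discretely_geodesic : Prop :=
  forall x y : X, exists g : nat -> X,
    g 0 = x /\ g (d x y) = y /\
    forall i j, i <= d x y -> j <= d x y ->
      Z.of_nat (d (g i) (g j)) = Z.abs (Z.of_nat i - Z.of_nat j).

Definition interval (x y : X) (u : X) : Prop := d x u + d u y = d x y.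

Definition cone (x v : X) (y : X) : Prop := interval x y v.

(* Hausdorff distance between A and B is at most beta (distances are integers,
   so infima are attained) *)
Definition hausdorff_le (A B : X -> Prop) (beta : nat) : Prop :=
  (forall a, A a -> exists b, B b /\ d a b <= beta) /\
  (forall b, B b -> exists a, A a /\ d a b <= beta).

Definition stable_intervals (beta : nat) : Prop :=
  forall x y y' : X, d y y' = 1 ->
    hausdorff_le (interval x y) (interval x y') beta.

Definition F (x v u : X) : Z := Z.of_nat (d x u) - Z.of_nat (d x v).

End Defs.

(* Induct on d(v,y).  For y in C(x,v) at distance n+1 from v, a geodesic from
   v to y gives a neighbour y' of y with d(v,y') = n, and y' stays in C(x,v),
   so by induction v lies in I(x',y').  Stability of intervals yields a point u
   of I(x',y) within beta of v; comparing F_{xv} and F_{x'v} at u shows that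
   the detour through u costs no more than the detour through v, so
   v lies in I(x',y). *)
From Stdlib Require Import ZArith Lia.

Section Cones.
Context {X : Type} (M : IntMetric X).
Local Notation d := (dist M).

Lemma dist_refl (v : X) : d v v = 0.
Proof. apply dist_eq0; reflexivity. Qed.

Lemma cone_shorten (x v y y' : X) :
  cone M x v y -> interval M v y y' -> cone M x v y'.
Proof.
  unfold cone, interval; intros Hy Hy'.
  pose proof (dist_tri _ M x v y'); pose proof (dist_tri _ M x y' y); lia.
Qed.

Lemma geodesic_predecessor (v y : X) (n : nat) :
  discretely_geodesic M -> d v y = S n ->
  exists y', d v y' = n /\ d y' y = 1 /\ interval M v y y'.
Proof.
  intros Hgeo Hn; destruct (Hgeo v y) as [g [g0 [gy Hg]]].
  rewrite Hn in gy, Hg.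
  assert (Hvy' : d v (g n) = n).
  { pose proof (Hg 0 n ltac:(lia) ltac:(lia)) as H; rewrite g0 in H; lia. }
  assert (Hy'y : d (g n) y = 1).
  { pose proof (Hg n (S n) ltac:(lia) ltac:(lia)) as H; rewrite gy in H; lia. }
  exists (g n); unfold interval; rewrite Hn; lia.
Qed.

Lemma cone_step (beta : nat) (x x' v y y' : X) :
  stable_intervals M beta ->
  (forall u, ball M v beta u -> (F M x v u <= F M x' v u)%Z) ->
  d y' y = 1 -> cone M x' v y' -> cone M x v y -> cone M x' v y.
Proof.
  unfold cone, interval, F, ball; intros Hstab HF Hy'y Hx'y' Hxy.
  destruct (proj1 (Hstab x' y' y Hy'y) v Hx'y') as [u [Hu Hvu]].
  specialize (HF u Hvu); unfold interval in Hu.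
  pose proof (dist_tri _ M x u y); pose proof (dist_tri _ M x' v y).
  pose proof (dist_tri _ M v u y); pose proof (dist_tri _ M x v u); lia.
Qed.

Lemma cone_mono (beta : nat) (x x' v : X) :
  discretely_geodesic M -> stable_intervals M beta ->
  (forall u, ball M v beta u -> (F M x v u <= F M x' v u)%Z) ->
  forall y, cone M x v y -> cone M x' v y.
Proof.
  intros Hgeo Hstab HF y.
  remember (d v y) as n eqn:Hn; revert y Hn.
  induction n as [|n IH]; intros y Hn Hy.
  - assert (y = v) as -> by (symmetry; apply (dist_eq0 _ M); auto).
    unfold cone, interval; rewrite dist_refl; lia.
  - destruct (geodesic_predecessor v y n Hgeo (eq_sym Hn)) as [y' [Hvy' [Hy'y Hint]]].
    apply (cone_step beta x x' v y y'); auto.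
    exact (IH y' (eq_sym Hvy') (cone_shorten x v y y' Hy Hint)).
Qed.

End Cones.

Theorem lemma5p8 (X : Type) (M : IntMetric X) (beta : nat)
  (Hgeo : discretely_geodesic M) (Hstab : stable_intervals M beta)
  (x x' v : X) :
  ((forall u, ball M v beta u -> (F M x v u <= F M x' v u)%Z) ->
     forall y, cone M x v y -> cone M x' v y) /\
  ((forall u, ball M v beta u -> F M x v u = F M x' v u) ->
     forall y, cone M x v y <-> cone M x' v y).
Proof.
  split; [exact (cone_mono M beta x x' v Hgeo Hstab) |].
  intros HF y; split; apply (cone_mono M beta); auto;
    intros u Hu; rewrite (HF u Hu); lia.
Qed.
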